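(* Let $m,n,k$ be positive integers, $A\in\mathbb{R}^{m\times n}$ satisfying the $(2k+1)$-RIP with $\|A_i\|_2=1$ for every column $A_i$, $x^*\in\mathbb{R}^n$ with support $S^*$, $|S^*|\le k$, $e\in\mathbb{R}^m$, $y=Ax^*+e$. For every initialization $\mathcal{X}^0$, every $\eta>0$ and every $t\in\mathbb{N}$, the SEA iterates satisfy $$\left\|\frac{u^t}{\eta}-A^T(Ax^t-y)\right\|_\infty=\frac1\eta\|b^t\|_\infty\le\alpha_k^{RIP}\|x^*\|_2+\gamma_k^{RIP}\|e\|_2,$$ where $b^t=u^t-\eta A^T(Ax^t-y)$.
   Context: For $l\in\{1,\dots,n\}$, the restricted isometry constant $\delta_l$ of $A$ is the smallest $\delta\ge0$ such that $(1-\delta)\|x\|_2^2\le\|Ax\|_2^2\le(1+\delta)\|x\|_2^2$ for all $x$ with at most $l$ nonzero entries; $A$ satisfies the $l$-RIP if $\delta_l<1$. $\alpha_k^{RIP}=\delta_{2k+1}\left(1+\frac{\delta_{2k}}{1-\delta_k}\right)$ and $\gamma_k^{RIP}=1+\frac{\delta_{2k+1}\sqrt{1+\delta_k}}{1-\delta_k}$. $S^*=\{i:x^*_i\neq0\}$. For $v\in\mathbb{R}^n$, $\mathrm{largest}_k(v)$ is the set of indices of the $k$ entries of $v$ with largest absolute value (ties broken by selecting the highest indices). For $S\subseteq\{1,\dots,n\}$, $A_S$ is the submatrix of columns indexed by $S$, $v_S$ the restriction of a vector to $S$, $A_S^\dagger$ the Moore–Penrose pseudoinverse of $A_S$. SEA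 with initialization $\mathcal{X}^0$ and step size $\eta$ generates, for $t=0,1,2,\dots$: $S^t=\mathrm{largest}_k(\mathcal{X}^t)$; $x^t_i=0$ for $i\notin S^t$ and $x^t_{S^t}=A_{S^t}^\dagger y$; $\mathcal{X}^{t+1}=\mathcal{X}^t-\eta A^T(Ax^t-y)$. The oracle direction is $u^t_i=-\eta x^*_i$ if $i\in S^*\setminus S^t$ and $u^t_i=0$ otherwise. *)

From HB Require Import structures.
From mathcomp Require Import all_boot all_order all_algebra.
From mathcomp Require Import classical_sets reals.
From Stdlib Require Import ClassicalEpsilon.

Set Implicit Arguments.
Unset Strict Implicit.
Unset Printing Implicit Defensive.

Import Order.TTheory GRing.Theory Num.Theory.
Local Open Scope ring_scope.

Section SEA.
Variable R : realType.

Definition norm2 (p : nat) (v : 'cV[R]_p) : R :=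
  Num.sqrt (\sum_(i < p) v i 0 ^+ 2).

Definition norminf (p : nat) (v : 'cV[R]_p) : R :=
  \big[Num.max/0]_(i < p) `|v i 0|.

Definition supp (p : nat) (v : 'cV[R]_p) : {set 'I_p} :=
  [set i | v i 0 != 0].

Definition rip_ok (m n : nat) (A : 'M[R]_(m, n)) (l : nat) (d : R) : Prop :=
  0 <= d /\
  forall x : 'cV[R]_n, (#|supp x| <= l)%N ->
    (1 - d) * norm2 x ^+ 2 <= norm2 (A *m x) ^+ 2 /\
    norm2 (A *m x) ^+ 2 <= (1 + d) * norm2 x ^+ 2.

Definition rip_const (m n : nat) (A : 'M[R]_(m, n)) (l : nat) : R :=
  inf [set d | rip_ok A l d].

Definition alphaRIP (m n : nat) (A : 'M[R]_(m, n)) (k : nat) : R :=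
  rip_const A k.*2.+1 * (1 + rip_const A k.*2 / (1 - rip_const A k)).

Definition gammaRIP (m n : nat) (A : 'M[R]_(m, n)) (k : nat) : R :=
  1 + rip_const A k.*2.+1 * Num.sqrt (1 + rip_const A k) / (1 - rip_const A k).

Definition ranks_before (n : nat) (v : 'cV[R]_n) (i j : 'I_n) : bool :=
  (`|v j 0| < `|v i 0|) || ((`|v i 0| == `|v j 0|) && (j < i)%N).

(* largest_k(v): indices of the k entries of largest absolute value,
   ties broken by selecting the highest indices *)
Definition largest (n k : nat) (v : 'cV[R]_n) : {set 'I_n} :=
  [set i | (#|[set j | ranks_before v j i]| < k)%N].

(* A_S : the submatrix of columns indexed by S (in increasing order) *)
Definition colsubS (m n : nat) (A : 'M[R]_(m, n)) (S : {set 'I_n}) :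
  'M[R]_(m, #|S|) :=
  \matrix_(i < m, j < #|S|) A i (enum_val j).

Definition extS (n : nat) (S : {set 'I_n}) (z : 'cV[R]_#|S|) : 'cV[R]_n :=
  \matrix_(i < n, j < 1) \sum_(l < #|S|) (if enum_val l == i then z l 0 else 0).

Definition is_MPinv (p q : nat) (M : 'M[R]_(p, q)) (X : 'M[R]_(q, p)) : Prop :=
  [/\ M *m X *m M = M, X *m M *m X = X,
      (M *m X)^T = M *m X & (X *m M)^T = X *m M].

Definition MPinv (p q : nat) (M : 'M[R]_(p, q)) : 'M[R]_(q, p) :=
  epsilon (inhabits 0) (is_MPinv M).

Definition sea_x (m n k : nat) (A : 'M[R]_(m, n)) (y : 'cV[R]_m)
  (X : 'cV[R]_n) : 'cV[R]_n :=
  let S := largest k X in extS (MPinv (colsubS A S) *m y).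

Definition sea_step (m n k : nat) (A : 'M[R]_(m, n)) (y : 'cV[R]_m) (eta : R)
  (X : 'cV[R]_n) : 'cV[R]_n :=
  X - eta *: (A^T *m (A *m sea_x k A y X - y)).

Definition sea_X (m n k : nat) (A : 'M[R]_(m, n)) (y : 'cV[R]_m) (eta : R)
  (X0 : 'cV[R]_n) (t : nat) : 'cV[R]_n :=
  iter t (sea_step k A y eta) X0.

Definition sea_St (m n k : nat) (A : 'M[R]_(m, n)) (y : 'cV[R]_m) (eta : R)
  (X0 : 'cV[R]_n) (t : nat) : {set 'I_n} :=
  largest k (sea_X k A y eta X0 t).

Definition sea_xt (m n k : nat) (A : 'M[R]_(m, n)) (y : 'cV[R]_m) (eta : R)
  (X0 : 'cV[R]_n) (t : nat) : 'cV[R]_n :=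
  sea_x k A y (sea_X k A y eta X0 t).

Definition oracle_u (n : nat) (eta : R) (xs : 'cV[R]_n) (St : {set 'I_n}) :
  'cV[R]_n :=
  \col_i (if i \in supp xs :\: St then - eta * xs i 0 else 0).

End SEA.

(* At step t let S = S^t and x = x^t.  As x is the least-squares solution
   supported on S, the normal equations make the residual A x - y orthogonal
   to the columns of A_S, so u^t/eta - A^T (A x - y) vanishes on S.  Off S,
   using ||A_i|| = 1, its i-th entry is <A_i, A z'> - <A_i, e>, where z' is
   x - x^* with coordinate i zeroed; since e_i and z' are orthogonal and
   (2k+1)-sparse together, the RIP gives |<A_i, A z'>| <= delta_{2k+1} ||x - x^*||.
   Testing the normal equations against v = x - x^*_S gives
   (1 - delta_k) ||v|| <= delta_{2k} ||x^*|| + sqrt(1 + delta_k) ||e||, and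
   ||x - x^*|| <= ||v|| + ||x^*||; substituting yields exactly
   alpha ||x^*|| + gamma ||e||. *)

From HB Require Import structures.
From mathcomp Require Import all_boot all_order all_algebra.
From mathcomp Require Import classical_sets reals.
From mathcomp Require Import ring lra.
From Stdlib Require Import ClassicalEpsilon.

Set Implicit Arguments.
Unset Strict Implicit.
Unset Printing Implicit Defensive.

Import Order.TTheory GRing.Theory Num.Theory.
Local Open Scope ring_scope.

Section Euclidean.
Variable R : realType.
Implicit Types (p : nat).

Definition dot p (u v : 'cV[R]_p) : R := (u^T *m v) 0 0.

Lemma dotE p (u v : 'cV[R]_p) : dot u v = \sum_i u i 0 * v i 0.
Proof. by rewrite /dot mxE; apply: eq_bigr => i _; rewrite mxE. Qed.

Lemma dotC p (u v : 'cV[R]_p) : dot u v = dot v u.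
Proof. by rewrite !dotE; apply: eq_bigr => i _; rewrite mulrC. Qed.

Lemma dotDr p (u v w : 'cV[R]_p) : dot u (v + w) = dot u v + dot u w.
Proof. by rewrite /dot mulmxDr mxE. Qed.

Lemma dotNr p (u v : 'cV[R]_p) : dot u (- v) = - dot u v.
Proof. by rewrite /dot mulmxN mxE. Qed.

Lemma dotBr p (u v w : 'cV[R]_p) : dot u (v - w) = dot u v - dot u w.
Proof. by rewrite dotDr dotNr. Qed.

Lemma dotZr p (c : R) (u v : 'cV[R]_p) : dot u (c *: v) = c * dot u v.
Proof. by rewrite /dot -scalemxAr mxE. Qed.

Lemma dot0l p (v : 'cV[R]_p) : dot 0 v = 0.
Proof. by rewrite /dot trmx0 mul0mx mxE. Qed.

Lemma dot_mulmxl m p (A : 'M[R]_(m, p)) u w : dot (A *m u) w = dot u (A^T *m w).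
Proof. by rewrite /dot trmx_mul mulmxA. Qed.

Lemma dot_deltal p (i : 'I_p) (w : 'cV[R]_p) : dot (delta_mx i 0) w = w i 0.
Proof.
rewrite dotE (bigD1 i) //= big1 => [|j ji]; first by rewrite !mxE !eqxx mul1r addr0.
by rewrite mxE (negbTE ji) mul0r.
Qed.

Lemma dot_eq0_complement p (T : {set 'I_p}) (u v : 'cV[R]_p) :
  {in T, forall i, u i 0 = 0} -> {in ~: T, forall i, v i 0 = 0} -> dot u v = 0.
Proof.
move=> uT vT; rewrite dotE big1 // => i _.
have [/uT ->|iT] := boolP (i \in T); first by rewrite mul0r.
by rewrite vT ?mulr0 // inE iT.
Qed.

Lemma dot_expand p (s t : R) (u v : 'cV[R]_p) :
  dot (s *: u + t *: v) (s *: u + t *: v) =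
  s ^+ 2 * dot u u + 2 * s * t * dot u v + t ^+ 2 * dot v v.
Proof.
rewrite !dotE !mulr_sumr -!big_split /=.
by apply: eq_bigr => i _; rewrite !mxE; ring.
Qed.

Lemma dotvv_ge0 p (v : 'cV[R]_p) : 0 <= dot v v.
Proof. by rewrite dotE; apply: sumr_ge0 => i _; rewrite -expr2 sqr_ge0. Qed.

Lemma norm2_ge0 p (v : 'cV[R]_p) : 0 <= norm2 v.
Proof. exact: sqrtr_ge0. Qed.

Lemma norm2_sqr p (v : 'cV[R]_p) : norm2 v ^+ 2 = dot v v.
Proof.
rewrite /norm2 sqr_sqrtr; last by apply: sumr_ge0 => i _; rewrite sqr_ge0.
by rewrite dotE; apply: eq_bigr => i _; rewrite expr2.
Qed.

Lemma norm2_eq0 p (v : 'cV[R]_p) : norm2 v = 0 -> v = 0.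
Proof.
move=> v0; apply/matrixP => i j; rewrite (ord1 j) mxE.
have /psumr_eq0P vi : \sum_i v i 0 ^+ 2 = 0.
  by rewrite -(sqr_sqrtr (sumr_ge0 _ (fun i _ => sqr_ge0 (v i 0)))) -/(norm2 v) v0 expr0n.
by apply/eqP; rewrite -sqrf_eq0 vi // => l _; rewrite sqr_ge0.
Qed.

Lemma norm2_delta p (i : 'I_p) : norm2 (delta_mx i 0 : 'cV[R]_p) = 1.
Proof.
apply/eqP; rewrite -(@eqrXn2 _ 2) ?norm2_ge0 // norm2_sqr dot_deltal.
by rewrite mxE !eqxx expr1n.
Qed.

Lemma cauchy_schwarz p (u v : 'cV[R]_p) : `|dot u v| <= norm2 u * norm2 v.
Proof.
set a := norm2 u; set b := norm2 v.
have [u0|anz] := eqVneq a 0; first by rewrite (norm2_eq0 u0) dot0l normr0 u0 mul0r.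
have [v0|bnz] := eqVneq b 0.
  by rewrite (norm2_eq0 v0) dotC dot0l normr0 v0 mulr0.
have ab0 : 0 < a * b by rewrite mulr_gt0 // lt0r ?anz ?bnz ?norm2_ge0.
have hp := dotvv_ge0 (b *: u + a *: v).
have hm := dotvv_ge0 (b *: u + (- a) *: v).
rewrite dot_expand -!norm2_sqr -/a -/b in hp.
rewrite dot_expand -!norm2_sqr -/a -/b in hm.
by rewrite ler_norml; apply/andP; split; rewrite -(ler_pM2l ab0); nra.
Qed.

Lemma ler_norm2D p (u v : 'cV[R]_p) : norm2 (u + v) <= norm2 u + norm2 v.
Proof.
have := dot_expand 1 1 u v; rewrite !scale1r !expr1n !mul1r mulr1 -!norm2_sqr.
have := le_trans (ler_norm (dot u v)) (cauchy_schwarz u v).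
have := norm2_ge0 (u + v); have := norm2_ge0 u; have := norm2_ge0 v.
nra.
Qed.

Lemma norm2N p (v : 'cV[R]_p) : norm2 (- v) = norm2 v.
Proof. by rewrite /norm2; congr Num.sqrt; apply: eq_bigr => i _; rewrite mxE sqrrN. Qed.

Definition restrict p (T : {set 'I_p}) (v : 'cV[R]_p) : 'cV[R]_p :=
  \col_i (if i \in T then v i 0 else 0).

Lemma norm2_restrict p (T : {set 'I_p}) (v : 'cV[R]_p) :
  norm2 (restrict T v) <= norm2 v.
Proof.
apply: ler_wsqrtr; apply: ler_sum => i _; rewrite mxE.
by case: ifP => _; rewrite ?expr0n ?sqr_ge0.
Qed.

Lemma restrictID p (T : {set 'I_p}) (v : 'cV[R]_p) :
  v = restrict T v + restrict (~: T) v.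
Proof.
by apply/matrixP => i j; rewrite (ord1 j) !mxE inE; case: (i \in T); rewrite ?addr0 ?add0r.
Qed.

Lemma norminfZ p (c : R) (v : 'cV[R]_p) : norminf (c *: v) = `|c| * norminf v.
Proof.
rewrite /norminf (big_endo (fun x => `|c| * x)) ?mulr0 //.
  by apply: eq_bigr => i _; rewrite mxE normrM.
by move=> x y; rewrite maxr_pMr.
Qed.

Lemma norminf_le p (v : 'cV[R]_p) (c : R) :
  0 <= c -> (forall i, `|v i 0| <= c) -> norminf v <= c.
Proof. by move=> c0 vc; apply: bigmax_le. Qed.

Lemma subset_supp p (T : {set 'I_p}) (v : 'cV[R]_p) :
  (forall i, i \notin T -> v i 0 = 0) -> supp v \subset T.
Proof.
by move=> vT; apply/fintype.subsetP => i; rewrite inE; apply: contraR => /vT ->.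
Qed.

End Euclidean.

Lemma ler_inf_mulr (R : realType) (E : set R) (a N : R) :
  (exists d, E d) -> 0 <= N -> (forall d, E d -> a <= d * N) -> a <= inf E * N.
Proof.
move=> [d0 Ed0] N0 aE; have [N_0|Npos] := eqVneq N 0.
  by have := aE _ Ed0; rewrite N_0 !mulr0.
have {}Npos : 0 < N by rewrite lt0r Npos.
rewrite -ler_pdivrMr //; apply: lb_le_inf; first by exists d0.
by move=> d Ed; rewrite ler_pdivrMr ?aE.
Qed.

Section RestrictedIsometry.
Variables (R : realType) (m n : nat) (A : 'M[R]_(m, n)).

Lemma rip_ok_exists l : exists d, rip_ok A l d.
Proof.
pose T := \sum_(i < m) norm2 (row i A)^T ^+ 2.
have T0 : 0 <= T by apply: sumr_ge0 => i _; rewrite sqr_ge0.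
exists (1 + T); split=> [|x _]; first lra.
have AxT : norm2 (A *m x) ^+ 2 <= T * norm2 x ^+ 2.
  rewrite /norm2 sqr_sqrtr ?sumr_ge0 // => [|i _]; last by rewrite sqr_ge0.
  rewrite /T mulr_suml; apply: ler_sum => i _.
  have -> : (A *m x) i 0 = dot (row i A)^T x.
    by rewrite dotE mxE; apply: eq_bigr => j _; rewrite !mxE.
  rewrite -exprMn -real_normK ?num_real // lerXn2r ?nnegrE ?mulr_ge0 ?norm2_ge0 //.
  exact: cauchy_schwarz.
have := sqr_ge0 (norm2 x); have := sqr_ge0 (norm2 (A *m x)).
split; nra.
Qed.

Lemma rip_const_ge0 l : 0 <= rip_const A l.
Proof. by apply: lb_le_inf => [|d []]; first exact: rip_ok_exists. Qed.

Lemma le_rip_const l1 l2 : (l1 <= l2)%N -> rip_const A l1 <= rip_const A l2.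
Proof.
move=> l12; apply: lb_le_inf => [|d [d0 okd]]; first exact: rip_ok_exists.
have lb0 : has_lbound [set d | rip_ok A l1 d] by exists 0 => ? [].
apply: (ge_inf lb0).
by split=> // x xl; apply: okd; apply: leq_trans l12.
Qed.

Lemma rip_const_bounds l (x : 'cV[R]_n) : (#|supp x| <= l)%N ->
  (1 - rip_const A l) * norm2 x ^+ 2 <= norm2 (A *m x) ^+ 2 /\
  norm2 (A *m x) ^+ 2 <= (1 + rip_const A l) * norm2 x ^+ 2.
Proof.
move=> xl; have N0 := sqr_ge0 (norm2 x).
have lo : norm2 x ^+ 2 - norm2 (A *m x) ^+ 2 <= rip_const A l * norm2 x ^+ 2.
  apply: ler_inf_mulr (rip_ok_exists l) N0 _ => d [_ /(_ x xl)]; lra.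
have hi : norm2 (A *m x) ^+ 2 - norm2 x ^+ 2 <= rip_const A l * norm2 x ^+ 2.
  apply: ler_inf_mulr (rip_ok_exists l) N0 _ => d [_ /(_ x xl)]; lra.
split; lra.
Qed.

Lemma rip_norm2_mulmx l (x : 'cV[R]_n) : (#|supp x| <= l)%N ->
  norm2 (A *m x) <= Num.sqrt (1 + rip_const A l) * norm2 x.
Proof.
move=> /rip_const_bounds[_ hi].
rewrite -[norm2 x]ger0_norm ?norm2_ge0 // -sqrtr_sqr -sqrtrM ?addr_ge0 ?rip_const_ge0 //.
by rewrite -[norm2 (A *m x)]ger0_norm ?norm2_ge0 // -sqrtr_sqr ler_wsqrtr.
Qed.

Lemma rip_mulmx_eq0 l (x : 'cV[R]_n) :
  rip_const A l < 1 -> (#|supp x| <= l)%N -> A *m x = 0 -> x = 0.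
Proof.
move=> dl1 /rip_const_bounds[lo _] Ax0; apply: norm2_eq0.
rewrite Ax0 [norm2 0 ^+ 2]norm2_sqr dot0l in lo.
have : norm2 x ^+ 2 == 0 by rewrite eq_le sqr_ge0 andbT; nra.
by rewrite sqrf_eq0 => /eqP.
Qed.

(* Polarization: 4 |u| |v| <A u, A v> is the difference of the squared norms
   of A (|v| u + |u| v) and A (|v| u - |u| v). *)
Lemma rip_dot_orthogonal l (u v : 'cV[R]_n) : dot u v = 0 ->
  (#|supp u :|: supp v| <= l)%N ->
  `|dot (A *m u) (A *m v)| <= rip_const A l * norm2 u * norm2 v.
Proof.
move=> uv0 uvl; set a := norm2 u; set b := norm2 v; set d := rip_const A l.
have [u0|anz] := eqVneq a 0.
  by rewrite (norm2_eq0 u0) mulmx0 dot0l normr0 u0 mulr0 mul0r.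
have [v0|bnz] := eqVneq b 0.
  by rewrite (norm2_eq0 v0) mulmx0 dotC dot0l normr0 v0 mulr0.
have ab0 : 0 < a * b by rewrite mulr_gt0 // lt0r ?anz ?bnz ?norm2_ge0.
have supp_comb s t : (#|supp (s *: u + t *: v)| <= l)%N.
  apply: leq_trans uvl; apply/subset_leq_card/subset_supp => i.
  rewrite !inE => /norP[/negPn/eqP ui /negPn/eqP vi].
  by rewrite !mxE ui vi !mulr0 addr0.
have normE s t : norm2 (s *: u + t *: v) ^+ 2 = s ^+ 2 * a ^+ 2 + t ^+ 2 * b ^+ 2.
  by rewrite norm2_sqr dot_expand uv0 -!norm2_sqr mulr0 addr0.
have AnormE s t : norm2 (A *m (s *: u + t *: v)) ^+ 2 =
    s ^+ 2 * dot (A *m u) (A *m u) + 2 * s * t * dot (A *m u) (A *m v)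
    + t ^+ 2 * dot (A *m v) (A *m v).
  by rewrite mulmxDr -!scalemxAr norm2_sqr dot_expand.
have [lo1 hi1] := rip_const_bounds (supp_comb b a).
have [lo2 hi2] := rip_const_bounds (supp_comb b (- a)).
rewrite normE AnormE -/d in lo1 hi1; rewrite normE AnormE -/d in lo2 hi2.
move: (dot (A *m u) (A *m u)) (dot (A *m v) (A *m v)) (dot (A *m u) (A *m v))
  lo1 hi1 lo2 hi2 => U V P *.
by rewrite ler_norml; apply/andP; split; rewrite -(ler_pM2l ab0); nra.
Qed.

Lemma rip_const_k_lt1 k : rip_const A k.*2.+1 < 1 -> rip_const A k < 1.
Proof. by apply: le_lt_trans; rewrite le_rip_const // leqW // -addnn leq_addr. Qed.

Lemma alphaRIP_ge0 k : rip_const A k < 1 -> 0 <= alphaRIP A k.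
Proof.
move=> dk_lt1; rewrite /alphaRIP mulr_ge0 ?addr_ge0 ?divr_ge0 ?rip_const_ge0 //.
by rewrite subr_ge0 ltW.
Qed.

Lemma gammaRIP_ge0 k : rip_const A k < 1 -> 0 <= gammaRIP A k.
Proof.
move=> dk_lt1.
rewrite /gammaRIP addr_ge0 ?mulr_ge0 ?invr_ge0 ?sqrtr_ge0 ?rip_const_ge0 //.
by rewrite subr_ge0 ltW.
Qed.

End RestrictedIsometry.

Section Largest.
Variables (R : realType) (n : nat) (v : 'cV[R]_n).

Lemma ranks_before_irr i : ~~ ranks_before v i i.
Proof. by rewrite /ranks_before ltxx ltnn andbF. Qed.

Lemma ranks_before_trans i j l :
  ranks_before v i j -> ranks_before v j l -> ranks_before v i l.
Proof.
rewrite /ranks_before.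
case/orP => [ji|/andP[/eqP vij ji]]; case/orP => [lj|/andP[/eqP vjl lj]].
- by rewrite (lt_trans lj ji).
- by rewrite -vjl ji.
- by rewrite vij lj.
- by rewrite vij vjl eqxx (ltn_trans lj ji) orbT.
Qed.

Lemma ranks_before_total i j : i != j -> ranks_before v i j || ranks_before v j i.
Proof.
move=> ij; rewrite /ranks_before.
case: (ltgtP `|v i 0| `|v j 0|) => //= _; case: (ltngtP i j) => //= eq_ij.
by move: ij; rewrite (val_inj eq_ij) eqxx.
Qed.

Lemma card_largest k : (#|largest k v| <= k)%N.
Proof.
pose rank i := #|[set j | ranks_before v j i]|.
have rank_lt i j : ranks_before v i j -> (rank i < rank j)%N.
  move=> ij; apply: proper_card; apply/properP; split.
    by apply/fintype.subsetP => l; rewrite !inE => /ranks_before_trans; apply.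
  by exists i; rewrite !inE ?ij ?ranks_before_irr.
have rank_inj : injective rank.
  move=> i j rij; apply/eqP; apply: contraT => /ranks_before_total.
  by case/orP => /rank_lt; rewrite rij ltnn.
rewrite cardE -(size_map rank) -[k in (_ <= k)%N](size_iota 0).
apply: uniq_leq_size => [|r /mapP[i]]; first by rewrite map_inj_uniq ?enum_uniq.
by rewrite mem_enum inE => ik ->; rewrite mem_iota.
Qed.

End Largest.

Section ColumnSubmatrix.
Variables (R : realType) (m n : nat) (A : 'M[R]_(m, n)) (S : {set 'I_n}).

Lemma extS_enum_val (z : 'cV[R]_#|S|) l : extS z (enum_val l) 0 = z l 0.
Proof.
rewrite mxE (bigD1 l) //= eqxx big1 ?addr0 // => j jl.
by case: eqP => // /enum_val_inj jl'; move: jl; rewrite jl' eqxx.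
Qed.

Lemma extS_notin (z : 'cV[R]_#|S|) i : i \notin S -> extS z i 0 = 0.
Proof.
move=> iS; rewrite mxE big1 // => j _; case: eqP => // ji.
by move: iS; rewrite -ji enum_valP.
Qed.

Lemma mulmx_extS (z : 'cV[R]_#|S|) : A *m extS z = colsubS A S *m z.
Proof.
apply/matrixP => r c; rewrite (ord1 c) !mxE.
under eq_bigr => j _ do rewrite mxE mulr_sumr.
rewrite exchange_big /=; apply: eq_bigr => l _.
rewrite (bigD1 (enum_val l)) //= eqxx big1 ?addr0 ?mxE // => j jl.
by case: eqP => [lj|_]; [rewrite lj eqxx in jl | rewrite mulr0].
Qed.

Lemma trmx_colsubS_mul (r : 'cV[R]_m) l :
  (A^T *m r) (enum_val l) 0 = ((colsubS A S)^T *m r) l 0.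
Proof. by rewrite !mxE; apply: eq_bigr => i _; rewrite !mxE. Qed.

End ColumnSubmatrix.

Section MoorePenrose.
Variables (R : realType) (p q : nat) (M : 'M[R]_(p, q)).

Lemma is_MPinv_exists :
  (forall w : 'cV[R]_q, M *m w = 0 -> w = 0) -> exists X, is_MPinv M X.
Proof.
move=> M_inj; set B := M^T *m M.
have BT : B^T = B by rewrite /B trmx_mul trmxK.
have B_inj (w : 'cV[R]_q) : B *m w = 0 -> w = 0.
  move=> Bw0; apply: M_inj; apply: norm2_eq0; apply/eqP.
  by rewrite -sqrf_eq0 norm2_sqr dot_mulmxl mulmxA -/B Bw0 dotC dot0l.
have Bu : B \in unitmx.
  rewrite unitmxE unitfE; apply/negP => /det0P[w w0 wB].
  have /B_inj/(congr1 trmx) : B *m w^T = 0 by rewrite -BT -trmx_mul wB trmx0.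
  by rewrite trmxK trmx0 => w_0; rewrite w_0 eqxx in w0.
exists (invmx B *m M^T); split.
- by rewrite -!mulmxA -/B mulVmx // mulmx1.
- by rewrite -!mulmxA (mulmxA M^T M) -/B (mulmxA B) mulmxV // mul1mx.
- by rewrite !trmx_mul trmxK trmx_inv BT mulmxA.
- by rewrite -mulmxA -/B mulVmx // trmx1.
Qed.

Lemma MPinvP : (exists X, is_MPinv M X) -> is_MPinv M (MPinv M).
Proof. exact: epsilon_spec. Qed.

Lemma is_MPinv_normal X : is_MPinv M X -> M^T *m M *m X = M^T.
Proof. by case=> MXM _ MXT _; rewrite -mulmxA -MXT -trmx_mul MXM. Qed.

End MoorePenrose.

(* [delta_k < 1] makes [A_S] injective, so [MPinv] is a genuine pseudoinverse. *)
Lemma sea_x_normal (R : realType) m n k (A : 'M[R]_(m, n)) (y : 'cV[R]_m)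
    (X : 'cV[R]_n) : rip_const A k < 1 ->
  {in largest k X, forall i, (A^T *m (A *m sea_x k A y X - y)) i 0 = 0}.
Proof.
move=> dk_lt1 i iS; set S := largest k X; set M := colsubS A S.
have M_inj (w : 'cV[R]_#|S|) : M *m w = 0 -> w = 0.
  move=> Mw0; have ew0 : extS w = 0.
    apply: (rip_mulmx_eq0 dk_lt1); last by rewrite mulmx_extS.
    apply: leq_trans (card_largest X k).
    exact/subset_leq_card/subset_supp/extS_notin.
  by apply/matrixP => l c; rewrite (ord1 c) -extS_enum_val ew0 !mxE.
have normal : M^T *m (A *m sea_x k A y X - y) = 0.
  rewrite /sea_x -/S mulmx_extS mulmxBr !mulmxA -/M.
  by rewrite is_MPinv_normal ?subrr //; apply/MPinvP/is_MPinv_exists.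
by rewrite -(enum_rankK_in iS iS) trmx_colsubS_mul normal mxE.
Qed.

Lemma oracle_uE (R : realType) n (eta : R) (xs : 'cV[R]_n) (S : {set 'I_n}) :
  eta != 0 -> eta^-1 *: oracle_u eta xs S = - restrict (~: S) xs.
Proof.
move=> eta0; apply/matrixP => i j; rewrite (ord1 j) !mxE !inE.
case: (i \in S) => /=; first by rewrite mulr0 oppr0.
by case: eqP => [->|_] /=; rewrite ?mulr0 ?oppr0 // mulrA mulrN mulVf ?mulN1r.
Qed.

Section SupportedLeastSquares.
Variables (R : realType) (m n k : nat) (A : 'M[R]_(m, n)).
Variables (S : {set 'I_n}) (x xs : 'cV[R]_n) (e y : 'cV[R]_m).
Hypothesis card_S : (#|S| <= k)%N.
Hypothesis x_notin : forall i, i \notin S -> x i 0 = 0.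
Hypothesis normal : {in S, forall i, (A^T *m (A *m x - y)) i 0 = 0}.
Hypothesis card_xs : (#|supp xs| <= k)%N.
Hypothesis y_def : y = A *m xs + e.

Lemma card_setU_supp : (#|S :|: supp xs| <= k.*2)%N.
Proof. by rewrite -addnn (leq_trans (leq_card_setU _ _).1) ?leq_add. Qed.

Lemma supported_error_restrict :
  (1 - rip_const A k) * norm2 (x - restrict S xs) <=
  rip_const A k.*2 * norm2 xs + Num.sqrt (1 + rip_const A k) * norm2 e.
Proof.
set v := x - restrict S xs; set c := restrict (~: S) xs.
have v_notin i : i \notin S -> v i 0 = 0.
  by move=> iS; rewrite !mxE x_notin // (negbTE iS) subrr.
have c_in : {in S, forall i, c i 0 = 0} by move=> i iS; rewrite mxE inE iS.
have v_c : dot v c = 0.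
  by rewrite dotC (dot_eq0_complement c_in) // => i; rewrite inE => /v_notin.
have residual : A *m x - y = A *m v - A *m c - e.
  rewrite y_def opprD addrA -!mulmxBr; congr (A *m _ - e).
  apply/matrixP => i j; rewrite /v /c (ord1 j) !mxE inE.
  by case: (i \in S); rewrite /= subr0.
have AvAv : dot (A *m v) (A *m v) = dot (A *m v) (A *m c) + dot (A *m v) e.
  apply/eqP; rewrite -subr_eq0 opprD addrA -!dotBr -residual dot_mulmxl dotC.
  by rewrite (dot_eq0_complement (T := S) normal) // => i; rewrite inE => /v_notin.
have supp_v : supp v \subset S by apply: subset_supp.
have [lo _] := rip_const_bounds A (leq_trans (subset_leq_card supp_v) card_S).
have cross : dot (A *m v) (A *m c) <= rip_const A k.*2 * norm2 v * norm2 xs.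
  apply: le_trans (ler_norm _) _; apply: le_trans (rip_dot_orthogonal A v_c _) _.
    apply: leq_trans card_setU_supp; apply/subset_leq_card; apply: finset.setUSS => //.
    by apply: subset_supp => i; rewrite inE negbK mxE => /eqP ->; rewrite if_same.
  by rewrite ler_wpM2l ?mulr_ge0 ?rip_const_ge0 ?norm2_ge0 ?norm2_restrict.
have noise : dot (A *m v) e <= Num.sqrt (1 + rip_const A k) * norm2 v * norm2 e.
  apply: le_trans (ler_norm _) _; apply: le_trans (cauchy_schwarz _ _) _.
  rewrite ler_wpM2r ?norm2_ge0 //; apply: rip_norm2_mulmx.
  exact: leq_trans (subset_leq_card supp_v) card_S.
have key : (1 - rip_const A k) * norm2 v * norm2 v <=
    (rip_const A k.*2 * norm2 xs + Num.sqrt (1 + rip_const A k) * norm2 e) * norm2 v.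
  rewrite -mulrA -expr2; apply: le_trans lo _.
  by rewrite norm2_sqr AvAv mulrDl; apply: lerD; rewrite mulrAC.
have [v0|v_neq0] := eqVneq (norm2 v) 0.
  by rewrite v0 mulr0 addr_ge0 ?mulr_ge0 ?sqrtr_ge0 ?rip_const_ge0 ?norm2_ge0.
by rewrite -(ler_pM2r (_ : 0 < norm2 v)) // lt0r v_neq0 norm2_ge0.
Qed.

Lemma supported_error : rip_const A k < 1 ->
  norm2 (x - xs) <= norm2 xs +
    (rip_const A k.*2 * norm2 xs + Num.sqrt (1 + rip_const A k) * norm2 e) /
    (1 - rip_const A k).
Proof.
move=> dk_lt1; rewrite {1}(restrictID S xs) opprD addrA.
apply: le_trans (ler_norm2D _ _) _; rewrite norm2N [leRHS]addrC lerD ?norm2_restrict //.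
by rewrite ler_pdivlMr ?subr_gt0 // mulrC supported_error_restrict.
Qed.

Hypothesis col_normed : forall j, norm2 (col j A) = 1.

Lemma supported_gap_entry i : i \notin S ->
  `|xs i 0 + (A^T *m (A *m x - y)) i 0| <=
  norm2 e + rip_const A k.*2.+1 * norm2 (x - xs).
Proof.
move=> iS; set z := x - xs; set z' := restrict (~: [set i]) z.
have z_split : z = z' + z i 0 *: delta_mx i 0.
  apply/matrixP => j c; rewrite (ord1 c) !mxE !inE.
  by case: eqVneq => [->|]; rewrite /= ?mulr1 ?mulr0 ?addr0 ?add0r.
have z_i : z i 0 = - xs i 0 by rewrite !mxE x_notin // sub0r.
have gap : xs i 0 + (A^T *m (A *m x - y)) i 0 =
    dot (col i A) (A *m z') - dot (col i A) e.
  rewrite -[(A^T *m _) i 0]dot_deltal -dot_mulmxl -colE y_def opprD addrA.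
  rewrite -mulmxBr -/z {1}z_split mulmxDr -scalemxAr -colE dotBr dotDr dotZr.
  by rewrite -norm2_sqr col_normed z_i expr1n; ring.
rewrite gap; apply: le_trans (ler_normB _ _) _; rewrite [leRHS]addrC lerD //.
  rewrite colE; apply: le_trans (rip_dot_orthogonal A _ _) _.
  - by rewrite dot_deltal !mxE !inE eqxx.
  - apply: (@leq_trans #|i |: (S :|: supp xs)|).
      apply/subset_leq_card; rewrite finset.subUset.
      apply/andP; split; apply: subset_supp => j.
        by rewrite !inE => /norP[/negbTE ji _]; rewrite mxE ji.
      rewrite !inE => /norP[ji /norP[jS /negPn/eqP xsj]].
      by rewrite !mxE !inE ji x_notin // xsj subrr.
    by rewrite cardsU1; apply: leq_add (leq_b1 _) card_setU_supp.
  by rewrite norm2_delta mulr1 ler_wpM2l ?rip_const_ge0 ?norm2_restrict.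
by have := cauchy_schwarz (col i A) e; rewrite col_normed mul1r.
Qed.

Hypothesis rip_lt1 : rip_const A k.*2.+1 < 1.

Lemma supported_gap_bound i : i \notin S ->
  `|xs i 0 + (A^T *m (A *m x - y)) i 0| <=
  alphaRIP A k * norm2 xs + gammaRIP A k * norm2 e.
Proof.
move=> iS; apply: le_trans (supported_gap_entry iS) _.
have := ler_wpM2l (rip_const_ge0 A k.*2.+1) (supported_error (rip_const_k_lt1 rip_lt1)).
move=> /(lerD (lexx (norm2 e)))/le_trans; apply.
by rewrite /alphaRIP /gammaRIP le_eqVlt; apply/orP; left; apply/eqP; ring.
Qed.

End SupportedLeastSquares.

Theorem lemmaC11 (R : realType) (m n k : nat) (A : 'M[R]_(m, n))
  (xs : 'cV[R]_n) (e : 'cV[R]_m) (y : 'cV[R]_m)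
  (X0 : 'cV[R]_n) (eta : R) (t : nat) :
  (0 < m)%N -> (0 < n)%N -> (0 < k)%N ->
  (k.*2.+1 <= n)%N ->
  rip_const A k.*2.+1 < 1 ->
  (forall j : 'I_n, norm2 (col j A) = 1) ->
  (#|supp xs| <= k)%N ->
  y = A *m xs + e ->
  0 < eta ->
  let xt := sea_xt k A y eta X0 t in
  let ut := oracle_u eta xs (sea_St k A y eta X0 t) in
  let bt := ut - eta *: (A^T *m (A *m xt - y)) in
  norminf (eta^-1 *: ut - A^T *m (A *m xt - y)) = eta^-1 * norminf bt /\
  eta^-1 * norminf bt <= alphaRIP A k * norm2 xs + gammaRIP A k * norm2 e.
Proof.
move=> _ _ _ _ rip_lt1 col_normed card_xs y_def eta_gt0 xt ut bt.
set X := sea_X k A y eta X0 t; set S := largest k X.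
have dk_lt1 := rip_const_k_lt1 rip_lt1.
have x_notin i : i \notin S -> xt i 0 = 0 by apply: extS_notin.
set G := A^T *m (A *m xt - y).
have normal : {in S, forall i, G i 0 = 0} by exact: sea_x_normal.
have eta_neq0 : eta != 0 by rewrite gt_eqF.
have -> : bt = eta *: (eta^-1 *: ut - G) by rewrite scalerBr scalerA mulfV // scale1r.
rewrite norminfZ gtr0_norm // mulKf //; split=> //.
have bound_ge0 : 0 <= alphaRIP A k * norm2 xs + gammaRIP A k * norm2 e.
  by rewrite addr_ge0 // mulr_ge0 ?norm2_ge0 ?alphaRIP_ge0 ?gammaRIP_ge0.
apply: norminf_le => // i.
rewrite oracle_uE // -opprD mxE normrN mxE [restrict _ _ _ _]mxE inE.
have [iS|iS] := boolP (i \in S); first by rewrite add0r normal // normr0.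
exact: (supported_gap_bound (card_largest X k) x_notin normal card_xs y_def
  col_normed rip_lt1 iS).
Qed.
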